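(* Let $\mathcal{N}$ be an exact category and $k\ge 1$. Regarding a binary acyclic complex supported on $[0,k]$ as one supported on $[0,k+1]$ induces a well-defined homomorphism $L_1^k(\mathcal{N})\to K_1^{k+1}(\mathcal{N})$, and the homomorphism $i_k\colon L_1^k(\mathcal{N})\to L_1^{k+1}(\mathcal{N})$ (induced by the same assignment) factors as this homomorphism followed by the canonical epimorphism $K_1^{k+1}(\mathcal{N})\twoheadrightarrow L_1^{k+1}(\mathcal{N})$.
   Context: A binary acyclic complex $\mathbb{P}=(P_*,d,d')$ in $\mathcal{N}$ is a graded object $P_*$ of $\mathcal{N}$ supported on a finite subset of $[0,\infty)$, together with two degree $-1$ maps $d,d'$ (top and bottom differentials) such that both $\mathbb{P}^\top=(P_*,d)$ and $\mathbb{P}^\bot=(P_*,d')$ are acyclic chain complexes (each differential $P_n\to P_{n-1}$ factors as an admissible epimorphism $P_n\twoheadrightarrow J_{n-1}$ followed by an admissible monomorphism $J_{n-1}\rightarrowtail P_{n-1}$ with $J_n\rightarrowtail P_n\twoheadrightarrow J_{n-1}$ short exact for all $n$). It is diagonal if $d=d'$. Morphisms are degree-$0$ maps that are chain maps for both differentials; with degreewise short exact sequences these form an exact category. For $k\ge0$, $B_1^k(\mathcal{N})$ is the Grothendieck group of the exact category of binary acyclic complexes supported on $[0,k]$, and $K_1^k(\mathcal{N})$ is its quotient by classes of diagonal complexes. For isomorphisms $\alpha,\beta\colon P\to Q$, $\langle\alpha,\beta\rangle$ is the class of the binary complex with $P$ in degree $1$, $Q$ in degree $0$, top differential $\alpha$,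 bottom differential $\beta$. A binary ladder is $(\mathbb{P},\mathbb{Q},\sigma,\tau)$ with $\sigma\colon\mathbb{P}^\top\to\mathbb{Q}^\top$, $\tau\colon\mathbb{P}^\bot\to\mathbb{Q}^\bot$ chain isomorphisms. For $k\ge1$, $L_1^k(\mathcal{N})$ is the quotient of $K_1^k(\mathcal{N})$ by the relations $\mathbb{Q}-\mathbb{P}=\sum_{i=0}^k(-1)^i\langle\sigma_i,\tau_i\rangle$ for all binary ladders with $\mathbb{P},\mathbb{Q}$ supported on $[0,k]$, $P_i=Q_i$ for all $i$, and all $\sigma_i,\tau_i$ involutions. *)

From HB Require Import structures.
From mathcomp Require Import all_boot all_order all_algebra.
Set Implicit Arguments. Unset Strict Implicit. Unset Printing Implicit Defensive.
Import GRing.Theory.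
Local Open Scope ring_scope.

Record PreAddCat := {
  Obj : Type;
  Hom : Obj -> Obj -> zmodType;
  comp : forall A B C : Obj, Hom B C -> Hom A B -> Hom A C;
  idm : forall A : Obj, Hom A A;
  comp_assoc : forall A B C D (h : Hom C D) (g : Hom B C) (f : Hom A B),
      comp h (comp g f) = comp (comp h g) f;
  comp_id_l : forall A B (f : Hom A B), comp (idm B) f = f;
  comp_id_r : forall A B (f : Hom A B), comp f (idm A) = f;
  compDl : forall A B C (g1 g2 : Hom B C) (f : Hom A B),
      comp (g1 + g2) f = comp g1 f + comp g2 f;
  compDr : forall A B C (g : Hom B C) (f1 f2 : Hom A B),
      comp g (f1 + f2) = comp g f1 + comp g f2
}.

Arguments comp {_ _ _ _}.
Arguments idm {_}.

Section CatDefs.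
Variable C : PreAddCat.
Local Notation Ob := (Obj C).
Local Notation "g \oc f" := (comp g f) (at level 40, left associativity).

Definition is_zero_obj (Z : Ob) : Prop :=
  forall A : Ob, (forall f g : Hom Z A, f = g) /\ (forall f g : Hom A Z, f = g).

Definition is_iso (A B : Ob) (f : Hom A B) : Prop :=
  exists g : Hom B A, g \oc f = idm A /\ f \oc g = idm B.

Definition is_biproduct (A B S : Ob) (i1 : Hom A S) (i2 : Hom B S)
    (p1 : Hom S A) (p2 : Hom S B) : Prop :=
  [/\ p1 \oc i1 = idm A, p2 \oc i2 = idm B, p1 \oc i2 = 0, p2 \oc i1 = 0
    & i1 \oc p1 + i2 \oc p2 = idm S].

Definition is_kernel (K A B : Ob) (i : Hom K A) (p : Hom A B) : Prop :=
  p \oc i = 0 /\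
  forall (X : Ob) (g : Hom X A), p \oc g = 0 -> exists! h : Hom X K, i \oc h = g.

Definition is_cokernel (A B Q : Ob) (i : Hom A B) (p : Hom B Q) : Prop :=
  p \oc i = 0 /\
  forall (X : Ob) (g : Hom B X), g \oc i = 0 -> exists! h : Hom Q X, h \oc p = g.

Definition is_pushout (A B A' B' : Ob) (i : Hom A B) (f : Hom A A')
    (i' : Hom A' B') (f' : Hom B B') : Prop :=
  i' \oc f = f' \oc i /\
  forall (X : Ob) (u : Hom A' X) (v : Hom B X), u \oc f = v \oc i ->
    exists! h : Hom B' X, h \oc i' = u /\ h \oc f' = v.

Definition is_pullback (B C C' B' : Ob) (p : Hom B C) (f : Hom C' C)
    (p' : Hom B' C') (f' : Hom B' B) : Prop :=
  f \oc p' = p \oc f' /\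
  forall (X : Ob) (u : Hom X C') (v : Hom X B), f \oc u = p \oc v ->
    exists! h : Hom X B', p' \oc h = u /\ f' \oc h = v.

End CatDefs.

Record ExactCat := {
  ecat :> PreAddCat;
  zero_ob : Obj ecat;
  zero_obP : is_zero_obj zero_ob;
  biprod_ex : forall A B : Obj ecat, exists (S : Obj ecat) (i1 : Hom A S)
      (i2 : Hom B S) (p1 : Hom S A) (p2 : Hom S B), is_biproduct i1 i2 p1 p2;
  (* the class of conflations (admissible short exact sequences) *)
  conf : forall A B C : Obj ecat, Hom A B -> Hom B C -> Prop;
  conf_kc : forall A B C (i : Hom A B) (p : Hom B C),
      conf i p -> is_kernel i p /\ is_cokernel i p;
  conf_iso : forall A B C A' B' C' (i : Hom A B) (p : Hom B C)
      (i' : Hom A' B') (p' : Hom B' C')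
      (a : Hom A A') (b : Hom B B') (c : Hom C C'),
      is_iso a -> is_iso b -> is_iso c ->
      comp i' a = comp b i -> comp p' b = comp c p ->
      conf i p -> conf i' p';
  conf_id_mono : forall A : Obj ecat, exists (Z : Obj ecat) (p : Hom A Z),
      conf (idm A) p;
  conf_id_epi : forall A : Obj ecat, exists (Z : Obj ecat) (i : Hom Z A),
      conf i (idm A);
  conf_mono_comp : forall A B D (i : Hom A B) (j : Hom B D),
      (exists (C : Obj ecat) (p : Hom B C), conf i p) ->
      (exists (C : Obj ecat) (p : Hom D C), conf j p) ->
      exists (C : Obj ecat) (p : Hom D C), conf (comp j i) p;
  conf_epi_comp : forall B C D (p : Hom B C) (q : Hom C D),
      (exists (A : Obj ecat) (i : Hom A B), conf i p) ->
      (exists (A : Obj ecat) (i : Hom A C), conf i q) ->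
      exists (A : Obj ecat) (i : Hom A B), conf i (comp q p);
  conf_pushout : forall A B A' (i : Hom A B) (f : Hom A A'),
      (exists (C : Obj ecat) (p : Hom B C), conf i p) ->
      exists (B' : Obj ecat) (i' : Hom A' B') (f' : Hom B B'),
        is_pushout i f i' f' /\ exists (C : Obj ecat) (p : Hom B' C), conf i' p;
  conf_pullback : forall B C C' (p : Hom B C) (f : Hom C' C),
      (exists (A : Obj ecat) (i : Hom A B), conf i p) ->
      exists (B' : Obj ecat) (p' : Hom B' C') (f' : Hom B' B),
        is_pullback p f p' f' /\ exists (A : Obj ecat) (i : Hom A B'), conf i p'
}.

Arguments conf {_ _ _ _}.

Section Binary.
Variable N : ExactCat.
Local Notation Ob := (Obj N).
Local Notation "g \oc f" := (comp g f) (at level 40, left associativity).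

(* graded object P_n (n >= 0; all negative degrees are zero) with top and
   bottom differentials d_n, d'_n : P_(n+1) -> P_n *)
Record BinComplex := BinC {
  obj : nat -> Ob;
  dtop : forall n, Hom (obj n.+1) (obj n);
  dbot : forall n, Hom (obj n.+1) (obj n)
}.

Definition supported (k : nat) (X : BinComplex) : Prop :=
  forall n, (k < n)%N -> is_zero_obj (obj X n).

(* acyclicity of (P, d): d_n = m_n o e_n with J_(n+1) >-> P_(n+1) ->> J_n
   a conflation for all n >= 0, and J_0 >-> P_0 ->> J_(-1) = 0 a conflation *)
Definition acyclic (P : nat -> Ob) (d : forall n, Hom (P n.+1) (P n)) : Prop :=
  exists (J : nat -> Ob) (e : forall n, Hom (P n.+1) (J n))
         (m : forall n, Hom (J n) (P n)),
    [/\ forall n, d n = m n \oc e n,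
        forall n, conf (m n.+1) (e n)
      & exists (Z : Ob) (z : Hom (P 0%N) Z), is_zero_obj Z /\ conf (m 0%N) z].

Definition BinAcyc (k : nat) (X : BinComplex) : Prop :=
  [/\ supported k X, acyclic (@dtop X) & acyclic (@dbot X)].

Definition diagonal (X : BinComplex) : Prop := forall n, dtop X n = dbot X n.

Definition is_bmorph (X Y : BinComplex) (f : forall n, Hom (obj X n) (obj Y n))
  : Prop :=
  forall n, f n \oc dtop X n = dtop Y n \oc f n.+1 /\
            f n \oc dbot X n = dbot Y n \oc f n.+1.

(* <alpha, beta>: P in degree 1, Q in degree 0 *)
Definition angle_obj (P Q : Ob) (n : nat) : Ob :=
  match n with 0 => Q | 1 => P | _ => zero_ob N end.

Definition angle_d (P Q : Ob) (a : Hom P Q) (n : nat)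
  : Hom (angle_obj P Q n.+1) (angle_obj P Q n) :=
  match n return Hom (angle_obj P Q n.+1) (angle_obj P Q n) with
  | 0 => a | _.+1 => 0 end.

Definition angle (P Q : Ob) (a b : Hom P Q) : BinComplex :=
  BinC (angle_d a) (angle_d b).

(* f : BinComplex -> A induces a homomorphism K_1^k(N) -> A sending the class
   [X] to f X: it is additive on (degreewise) conflations of binary acyclic
   complexes supported on [0,k], and vanishes on diagonal ones. *)
Definition K1_additive (k : nat) (A : zmodType) (f : BinComplex -> A) : Prop :=
  (forall (X Y Z : BinComplex) (a : forall n, Hom (obj X n) (obj Y n))
          (b : forall n, Hom (obj Y n) (obj Z n)),
      BinAcyc k X -> BinAcyc k Y -> BinAcyc k Z ->
      is_bmorph a -> is_bmorph b -> (forall n, conf (a n) (b n)) ->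
      f Y = f X + f Z)
  /\ (forall X : BinComplex, BinAcyc k X -> diagonal X -> f X = 0).

Definition chain_map (P : nat -> Ob) (d1 d2 : forall n, Hom (P n.+1) (P n))
    (s : forall n, Hom (P n) (P n)) : Prop :=
  forall n, s n \oc d1 n = d2 n \oc s n.+1.

Definition involution (P : Ob) (s : Hom P P) : Prop := s \oc s = idm P.

(* f moreover induces a homomorphism L_1^k(N) -> A: it kills the ladder
   relations  [Q] - [P] = sum_(i=0)^k (-1)^i <sigma_i, tau_i>  for binary
   ladders (P, Q, sigma, tau) on [0,k] with P_i = Q_i and sigma_i, tau_i
   involutions. *)
Definition L1_additive (k : nat) (A : zmodType) (f : BinComplex -> A) : Prop :=
  K1_additive k f /\
  forall (P : nat -> Ob) (d d' e e' : forall n, Hom (P n.+1) (P n))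
         (s t : forall n, Hom (P n) (P n)),
    BinAcyc k (BinC d d') -> BinAcyc k (BinC e e') ->
    chain_map d e s -> chain_map d' e' t ->
    (forall i, involution (s i)) -> (forall i, involution (t i)) ->
    f (BinC e e') - f (BinC d d') =
      \sum_(i < k.+1) (f (angle (s i) (t i)) *~ ((-1) ^+ i)).

End Binary.

(* Let f be an additive invariant of binary acyclic complexes supported on
   [0, k+1].  For a binary ladder (P, Q, s, t) the mapping cone C of (s, t)
   fits into a conflation Q >-> C ->> (-P)[1], and filtering C by degree
   exhibits it as an iterated extension of the shifted complexes
   <s_i, t_i>[i].  Applied to the ladder of identities of X, whose angles are
   diagonal, the same two facts give f (X[1]) = - f X, hence
   f Q - f P = sum_i (-1)^i f <s_i, t_i>: the ladder relations of L_1^k hold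
   for f.  An additive invariant of L_1^(k+1) is in particular one of
   K_1^(k+1), which gives the factorisation of i_k. *)
From Pilot Require Import Defs.
From mathcomp Require Import all_boot all_order all_algebra.
From Stdlib Require Import ClassicalEpsilon.
Set Implicit Arguments. Unset Strict Implicit. Unset Printing Implicit Defensive.
Import GRing.Theory.
Local Open Scope ring_scope.
Local Notation "g \oc f" := (Defs.comp g f) (at level 40, left associativity).
Local Notation Hom := Defs.Hom.

Section PreAdditive.
Variable C : PreAddCat.
Implicit Types A B D Z : Obj C.

Lemma comp0l A B D (f : Hom A B) : (0 : Hom B D) \oc f = 0.
Proof. by apply: (addrI ((0 : Hom B D) \oc f)); rewrite -compDl !addr0. Qed.

Lemma comp0r A B D (g : Hom B D) : g \oc (0 : Hom A B) = 0.
Proof. by apply: (addrI (g \oc (0 : Hom A B))); rewrite -compDr !addr0. Qed.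

Lemma compNl A B D (g : Hom B D) (f : Hom A B) : (- g) \oc f = - (g \oc f).
Proof. by apply: (addrI (g \oc f)); rewrite -compDl !subrr comp0l. Qed.

Lemma compNr A B D (g : Hom B D) (f : Hom A B) : g \oc (- f) = - (g \oc f).
Proof. by apply: (addrI (g \oc f)); rewrite -compDr !subrr comp0r. Qed.

Lemma zero_obj_homL Z A (f g : Hom Z A) : is_zero_obj Z -> f = g.
Proof. by move=> hZ; apply: (proj1 (hZ A)). Qed.

Lemma zero_obj_homR Z A (f g : Hom A Z) : is_zero_obj Z -> f = g.
Proof. by move=> hZ; apply: (proj2 (hZ A)). Qed.

Lemma idm0_zero_obj Z : idm Z = 0 -> is_zero_obj Z.
Proof.
move=> id0 A; split=> f g.
- by rewrite -(comp_id_r f) -(comp_id_r g) id0 !comp0r.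
- by rewrite -(comp_id_l f) -(comp_id_l g) id0 !comp0l.
Qed.

Lemma is_iso_id A : is_iso (idm A).
Proof. by exists (idm A); rewrite comp_id_l. Qed.

Lemma is_isoN A B (f : Hom A B) : is_iso f -> is_iso (- f).
Proof. by case=> g [gf fg]; exists (- g); rewrite !compNl !compNr !opprK. Qed.

Lemma is_iso_zero Z Z' :
  is_zero_obj Z -> is_zero_obj Z' -> forall f : Hom Z Z', is_iso f.
Proof.
by move=> hZ hZ' f; exists 0; split; [apply: zero_obj_homL hZ | apply: zero_obj_homL hZ'].
Qed.

Lemma biproduct_cokernel A B S (i1 : Hom A S) (i2 : Hom B S) p1 p2 :
  is_biproduct i1 i2 p1 p2 -> is_cokernel i1 p2.
Proof.
case=> _ e22 _ e21 eid; split=> // X g gi1.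
exists (g \oc i2); split.
  by rewrite -comp_assoc -[RHS]comp_id_r -eid compDr !comp_assoc gi1 comp0l add0r.
by move=> h <-; rewrite -comp_assoc e22 comp_id_r.
Qed.

Lemma biproduct_sym A B S (i1 : Hom A S) (i2 : Hom B S) p1 p2 :
  is_biproduct i1 i2 p1 p2 -> is_biproduct i2 i1 p2 p1.
Proof. by case=> *; split => //; rewrite addrC. Qed.

End PreAdditive.

Lemma zero_ob0 {N : ExactCat} : is_zero_obj (zero_ob N).
Proof. exact: zero_obP. Qed.

Section ExactCategory.
Variable N : ExactCat.
Local Notation Ob := (Obj N).
Implicit Types A B Z : Ob.

Lemma conf_id_coker_zero A Z (p : Hom A Z) : conf (idm A) p -> is_zero_obj Z.
Proof.
move=> /conf_kc [_ [pid0 coker]].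
have p0 : p = 0 by rewrite -pid0 comp_id_r.
apply: idm0_zero_obj; case: (coker Z p pid0) => h [_ uniq].
by rewrite -(uniq (idm Z)) ?comp_id_l // -(uniq 0) // p0 comp0l.
Qed.

Lemma conf_id_ker_zero A Z (i : Hom Z A) : conf i (idm A) -> is_zero_obj Z.
Proof.
move=> /conf_kc [[idi0 ker] _].
have i0 : i = 0 by rewrite -idi0 comp_id_l.
apply: idm0_zero_obj; case: (ker Z i idi0) => h [_ uniq].
by rewrite -(uniq (idm Z)) ?comp_id_r // -(uniq 0) // i0 comp0r.
Qed.

Lemma conf_iso_zero A B Z (a : Hom A B) (z : Hom B Z) :
  is_iso a -> is_zero_obj Z -> conf a z.
Proof.
move=> a_iso hZ; case: (conf_id_mono A) => Z' [p hp].
apply: (conf_iso (a := idm A) (b := a) (c := 0) _ a_iso _ _ _ hp).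
- exact: is_iso_id.
- exact: (is_iso_zero (conf_id_coker_zero hp) hZ).
- by rewrite !comp_id_r.
- exact: zero_obj_homR.
Qed.

Lemma conf_zero_iso Z A B (z : Hom Z A) (a : Hom A B) :
  is_zero_obj Z -> is_iso a -> conf z a.
Proof.
move=> hZ a_iso; case: (conf_id_epi A) => Z' [i hi].
apply: (conf_iso (a := 0) (b := idm A) (c := a) _ _ a_iso _ _ hi).
- exact: (is_iso_zero (conf_id_ker_zero hi) hZ).
- exact: is_iso_id.
- exact: zero_obj_homL (conf_id_ker_zero hi).
- by rewrite comp_id_r.
Qed.

Lemma conf_zero Z1 Z2 Z3 (f : Hom Z1 Z2) (g : Hom Z2 Z3) :
  is_zero_obj Z1 -> is_zero_obj Z2 -> is_zero_obj Z3 -> conf f g.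
Proof. by move=> h1 h2 h3; apply: conf_iso_zero h3; exact: is_iso_zero. Qed.

Lemma conf_iso_cokernel A B B' C C' (i : Hom A B) (p : Hom B C)
    (j : Hom A B') (q : Hom B' C') (psi : Hom B B') :
  conf i p -> is_iso psi -> psi \oc i = j -> is_cokernel j q -> conf j q.
Proof.
move=> ip [phi [phipsi psiphi]] psii [qj0 qcoker].
have [pi0 pcoker] := proj2 (conf_kc ip).
have [c [cp _]] : exists! c : Hom C C', c \oc p = q \oc psi.
  by apply: pcoker; rewrite -comp_assoc psii.
have [c' [c'q _]] : exists! c' : Hom C' C, c' \oc q = p \oc phi.
  by apply: qcoker; rewrite -psii !comp_assoc -(comp_assoc p) phipsi comp_id_r.
have c'c : c' \oc c = idm C.
  have [h [_ uniq]] := pcoker C p pi0.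
  rewrite -(uniq (idm C)) ?comp_id_l // -(uniq (c' \oc c)) //.
  by rewrite -comp_assoc cp comp_assoc c'q -comp_assoc phipsi comp_id_r.
have cc' : c \oc c' = idm C'.
  have [h [_ uniq]] := qcoker C' q qj0.
  rewrite -(uniq (idm C')) ?comp_id_l // -(uniq (c \oc c')) //.
  by rewrite -comp_assoc c'q comp_assoc cp -comp_assoc psiphi comp_id_r.
apply: (conf_iso (a := idm A) (b := psi) (c := c) _ _ _ _ _ ip) => //.
- exact: is_iso_id.
- by exists phi.
- by exists c'.
- by rewrite comp_id_r.
Qed.

(* The inflation of a split sequence is the pushout of the inflation
   [0 >-> B] of [0 >-> B ->> B] along [0 -> A]. *)
Lemma biproduct_conf A B S (i1 : Hom A S) (i2 : Hom B S) p1 p2 :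
  is_biproduct i1 i2 p1 p2 -> conf i1 p2.
Proof.
move=> bip; have [e11 e22 e12 e21 eid] := bip.
case: (conf_id_epi B) => Z [i hi]; have hZ := conf_id_ker_zero hi.
have [B' [i' [f' [[_ pushout] [C [p' hp']]]]]] :=
  conf_pushout (0 : Hom Z A) (ex_intro _ B (ex_intro _ (idm B) hi)).
have [psi [[psii' psif'] _]] := pushout S i1 i2 (zero_obj_homL _ _ hZ).
pose phi := i' \oc p1 + f' \oc p2.
have phipsi : phi \oc psi = idm B'.
  have [h [_ uniq]] := pushout B' i' f' (zero_obj_homL _ _ hZ).
  rewrite -(uniq (idm B')) ?comp_id_l // -(uniq (phi \oc psi)) //.
  rewrite -!comp_assoc psii' psif' /phi !compDl -!comp_assoc e11 e12 e21 e22.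
  by rewrite !comp0r !comp_id_r addr0 add0r.
have psiphi : psi \oc phi = idm S by rewrite /phi compDr !comp_assoc psii' psif'.
apply: (conf_iso_cokernel hp' _ psii' (biproduct_cokernel bip)).
by exists phi.
Qed.

End ExactCategory.

Section ChosenBiproducts.
Variable N : ExactCat.
Local Notation Ob := (Obj N).

Definition bip_data (A B : Ob) := {S : Ob & (Hom A S * Hom B S * Hom S A * Hom S B)%type}.

Definition is_bip_data (A B : Ob) (x : bip_data A B) : Prop :=
  is_biproduct (projT2 x).1.1.1 (projT2 x).1.1.2 (projT2 x).1.2 (projT2 x).2.

Lemma bip_data_ex (A B : Ob) : exists x : bip_data A B, is_bip_data x.
Proof.
case: (biprod_ex A B) => S [i1 [i2 [p1 [p2 h]]]].
by exists (existT _ S (i1, i2, p1, p2)).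
Qed.

Definition bip_choice (A B : Ob) : bip_data A B :=
  proj1_sig (constructive_indefinite_description _ (bip_data_ex A B)).

Definition bip (A B : Ob) : Ob := projT1 (bip_choice A B).
Definition bip_i1 (A B : Ob) : Hom A (bip A B) := (projT2 (bip_choice A B)).1.1.1.
Definition bip_i2 (A B : Ob) : Hom B (bip A B) := (projT2 (bip_choice A B)).1.1.2.
Definition bip_p1 (A B : Ob) : Hom (bip A B) A := (projT2 (bip_choice A B)).1.2.
Definition bip_p2 (A B : Ob) : Hom (bip A B) B := (projT2 (bip_choice A B)).2.

Lemma bipP (A B : Ob) : is_biproduct (bip_i1 A B) (bip_i2 A B) (bip_p1 A B) (bip_p2 A B).
Proof. exact: proj2_sig (constructive_indefinite_description _ (bip_data_ex A B)). Qed.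

Variables A B : Ob.
Local Notation i1 := (bip_i1 A B).
Local Notation i2 := (bip_i2 A B).
Local Notation p1 := (bip_p1 A B).
Local Notation p2 := (bip_p2 A B).

Lemma bip_p1i1 : p1 \oc i1 = idm A. Proof. by case: (bipP A B). Qed.
Lemma bip_p2i2 : p2 \oc i2 = idm B. Proof. by case: (bipP A B). Qed.
Lemma bip_p1i2 : p1 \oc i2 = 0. Proof. by case: (bipP A B). Qed.
Lemma bip_p2i1 : p2 \oc i1 = 0. Proof. by case: (bipP A B). Qed.
Lemma bip_idE : i1 \oc p1 + i2 \oc p2 = idm (bip A B). Proof. by case: (bipP A B). Qed.

Lemma bip_p1i1K X (h : Hom X A) : p1 \oc (i1 \oc h) = h.
Proof. by rewrite comp_assoc bip_p1i1 comp_id_l. Qed.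
Lemma bip_p2i2K X (h : Hom X B) : p2 \oc (i2 \oc h) = h.
Proof. by rewrite comp_assoc bip_p2i2 comp_id_l. Qed.
Lemma bip_p1i2K X (h : Hom X B) : p1 \oc (i2 \oc h) = 0.
Proof. by rewrite comp_assoc bip_p1i2 comp0l. Qed.
Lemma bip_p2i1K X (h : Hom X A) : p2 \oc (i1 \oc h) = 0.
Proof. by rewrite comp_assoc bip_p2i1 comp0l. Qed.

Lemma bip_homL X (h h' : Hom (bip A B) X) :
  h \oc i1 = h' \oc i1 -> h \oc i2 = h' \oc i2 -> h = h'.
Proof.
move=> e1 e2; rewrite -(comp_id_r h) -(comp_id_r h') -bip_idE !compDr.
by rewrite !comp_assoc e1 e2.
Qed.

Lemma bip_homR X (h h' : Hom X (bip A B)) :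
  p1 \oc h = p1 \oc h' -> p2 \oc h = p2 \oc h' -> h = h'.
Proof.
move=> e1 e2; rewrite -(comp_id_l h) -(comp_id_l h') -bip_idE !compDl.
by rewrite -!comp_assoc e1 e2.
Qed.

Lemma bip_conf12 : conf i1 p2.
Proof. exact: biproduct_conf (bipP A B). Qed.

Lemma bip_conf21 : conf i2 p1.
Proof. exact: biproduct_conf (biproduct_sym (bipP A B)). Qed.

Lemma bip_zero_obj : is_zero_obj A -> is_zero_obj B -> is_zero_obj (bip A B).
Proof.
move=> hA hB; apply: idm0_zero_obj.
by rewrite -bip_idE (zero_obj_homL i1 0 hA) (zero_obj_homL i2 0 hB) !comp0l addr0.
Qed.

End ChosenBiproducts.

Ltac bip_simpl := do 3 rewrite ?compDl ?compDr ?compNl ?compNr ?comp0l ?comp0r -?comp_assoc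
  ?bip_p1i1 ?bip_p2i2 ?bip_p1i2 ?bip_p2i1 ?bip_p1i1K ?bip_p2i2K ?bip_p1i2K ?bip_p2i1K
  ?comp_id_l ?comp_id_r ?oppr0 ?addr0 ?add0r ?subr0 ?sub0r ?opprK ?subrr ?addNr.

Section Complexes.
Variable N : ExactCat.
Local Notation Ob := (Obj N).
Local Notation BinComplex := (BinComplex N).
Implicit Types (P : nat -> Ob) (X Y Z : BinComplex).

Definition is_complex P (d : forall n, Hom (P n.+1) (P n)) : Prop :=
  forall n, d n \oc d n.+1 = 0.

Definition vanishes_from (m : nat) P : Prop := forall n, (m <= n)%N -> is_zero_obj (P n).

Lemma acyclic_is_complex P (d : forall n, Hom (P n.+1) (P n)) : acyclic d -> is_complex d.
Proof.
case=> J [e [m [de conf_me _]]] n.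
rewrite !de -comp_assoc [e n \oc _]comp_assoc.
by case: (conf_kc (conf_me n)) => [[-> _] _]; rewrite comp0l comp0r.
Qed.

Lemma acyclic_zero_obj P (d : forall n, Hom (P n.+1) (P n)) :
  (forall n, is_zero_obj (P n)) -> acyclic d.
Proof.
move=> P0; exists P, d, (fun n => idm (P n)); split.
- by move=> n; rewrite comp_id_l.
- by move=> n; apply: conf_zero.
- exists (zero_ob N), 0; split; first exact: zero_ob0.
  by apply: conf_iso_zero; [exact: is_iso_id | exact: zero_ob0].
Qed.

Lemma acyclic_opp P (d : forall n, Hom (P n.+1) (P n)) :
  acyclic d -> acyclic (fun n => - d n).
Proof.
case=> J [e [m [de conf_me conf_m0]]].
exists J, (fun n => - e n), m; split => // n.
- by rewrite compNr de.
- apply: (conf_iso (a := idm _) (b := idm _) (c := - idm _) _ _ _ _ _ (conf_me n)).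
  + exact: is_iso_id.
  + exact: is_iso_id.
  + exact/is_isoN/is_iso_id.
  + by rewrite comp_id_l comp_id_r.
  + by rewrite !compNl comp_id_l comp_id_r.
Qed.

Definition shift_obj P (n : nat) : Ob := if n is n'.+1 then P n' else zero_ob N.

Definition shift_hom P Q (a : forall n, Hom (P n) (Q n)) (n : nat) :
    Hom (shift_obj P n) (shift_obj Q n) :=
  match n with 0 => 0 | n'.+1 => a n' end.

Definition shift_d P (d : forall n, Hom (P n.+1) (P n)) (n : nat) :
    Hom (shift_obj P n.+1) (shift_obj P n) :=
  match n with 0 => 0 | n'.+1 => d n' end.

Definition shift X : BinComplex := BinC (shift_d (@dtop N X)) (shift_d (@dbot N X)).

Definition unshift X : BinComplex :=
  @BinC N (fun n => obj X n.+1) (fun n => dtop X n.+1) (fun n => dbot X n.+1).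

Definition opp_complex X : BinComplex :=
  BinC (fun n => - dtop X n) (fun n => - dbot X n).

Definition zero_complex : BinComplex :=
  @BinC N (fun _ => zero_ob N) (fun _ => 0) (fun _ => 0).

Lemma acyclic_shift P (d : forall n, Hom (P n.+1) (P n)) :
  acyclic d -> acyclic (shift_d d).
Proof.
case=> J [e [m [de conf_me [Z [z [hZ conf_m0]]]]]].
pose e' n : Hom (shift_obj P n.+1) (shift_obj J n) :=
  match n with 0 => 0 | n'.+1 => e n' end.
exists (shift_obj J), e', (shift_hom m); split.
- by case=> [|n] /=; [rewrite comp0l | exact: de].
- case=> [|n] //=.
  apply: (conf_iso (a := idm _) (b := idm _) (c := 0) _ _ _ _ _ conf_m0).
  + exact: is_iso_id.
  + exact: is_iso_id.
  + by apply: is_iso_zero; [exact: hZ | exact: zero_ob0].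
  + by rewrite comp_id_l comp_id_r.
  + by rewrite !comp0l.
- by exists (zero_ob N), 0; split; [|apply: conf_zero]; exact: zero_ob0.
Qed.

Lemma BinAcyc_le k K X : (k <= K)%N -> BinAcyc k X -> BinAcyc K X.
Proof. by move=> kK [hs ht hb]; split => // n /(leq_ltn_trans kK); apply: hs. Qed.

Lemma BinAcyc_shift k X : BinAcyc k X -> BinAcyc k.+1 (shift X).
Proof. by case=> hs ht hb; split; [case=> // n /hs | exact: acyclic_shift ..]. Qed.

Lemma BinAcyc_iter_shift i k X : BinAcyc k X -> BinAcyc (i + k) (iter i shift X).
Proof. by move=> hX; elim: i => //= i IH; apply: BinAcyc_shift. Qed.

Lemma BinAcyc_opp k X : BinAcyc k X -> BinAcyc k (opp_complex X).
Proof. by case=> hs ht hb; split => //; apply: acyclic_opp. Qed.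

Lemma BinAcyc_zero_obj k X : (forall n, is_zero_obj (obj X n)) -> BinAcyc k X.
Proof. by move=> X0; split; [move=> n _; apply: X0 | apply: acyclic_zero_obj ..]. Qed.

Lemma acyclic_angle_d (A B : Ob) (a : Hom A B) : is_iso a -> acyclic (angle_d a).
Proof.
move=> a_iso.
pose J n : Ob := if n is 0 then B else zero_ob N.
pose e n : Hom (angle_obj A B n.+1) (J n) := if n is 0 then a else 0.
pose m n : Hom (J n) (angle_obj A B n) := if n is 0 then idm B else 0.
exists J, e, m; split.
- by case=> [|n] /=; rewrite ?comp_id_l ?comp0l.
- case=> [|n] /=; first by apply: conf_zero_iso a_iso; exact: zero_ob0.
  by apply: conf_zero; exact: zero_ob0.
- exists (zero_ob N), 0; split; first exact: zero_ob0.
  by apply: conf_iso_zero; [exact: is_iso_id | exact: zero_ob0].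
Qed.

Lemma BinAcyc_angle k (A B : Ob) (a b : Hom A B) :
  (1 <= k)%N -> is_iso a -> is_iso b -> BinAcyc k (angle a b).
Proof.
move=> k_gt0 a_iso b_iso.
split; [|exact: acyclic_angle_d a_iso|exact: acyclic_angle_d b_iso].
by case=> [|[|n]] hn //=; [rewrite ltnNge k_gt0 in hn | exact: zero_ob0].
Qed.

Lemma diagonal_shift X : diagonal X -> diagonal (shift X).
Proof. by move=> dX [|n] //=. Qed.

Lemma diagonal_iter_shift i X : diagonal X -> diagonal (iter i shift X).
Proof. by move=> dX; elim: i => //= i; apply: diagonal_shift. Qed.

Lemma diagonal_zero_obj X : (forall n, is_zero_obj (obj X n)) -> diagonal X.
Proof. by move=> X0 n; apply: zero_obj_homR. Qed.

Definition short_exact k X Y Z : Prop :=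
  [/\ BinAcyc k X, BinAcyc k Y, BinAcyc k Z &
    exists (a : forall n, Hom (obj X n) (obj Y n)) (b : forall n, Hom (obj Y n) (obj Z n)),
      [/\ is_bmorph a, is_bmorph b & forall n, conf (a n) (b n)]].

Lemma short_exact_shift k X Y Z :
  short_exact k X Y Z -> short_exact k.+1 (shift X) (shift Y) (shift Z).
Proof.
case=> hX hY hZ [a [b [ha hb conf_ab]]].
split; try exact: BinAcyc_shift.
exists (shift_hom a), (shift_hom b); split.
- by case=> [|n] //=; split; apply: zero_obj_homR; exact: zero_ob0.
- by case=> [|n] //=; split; apply: zero_obj_homR; exact: zero_ob0.
- by case=> [|n] //=; apply: conf_zero; exact: zero_ob0.
Qed.

End Complexes.
Arguments shift {N} X.

Section Cone.
Variable N : ExactCat.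
Local Notation Ob := (Obj N).
Local Notation BinComplex := (BinComplex N).
Implicit Types (P Q : nat -> Ob) (X Y : BinComplex).

Definition chain_iso P Q (d : forall n, Hom (P n.+1) (P n)) (e : forall n, Hom (Q n.+1) (Q n))
    (s : forall n, Hom (P n) (Q n)) : Prop :=
  (forall n, is_iso (s n)) /\ (forall n, s n \oc d n = e n \oc s n.+1).

Definition cone_obj P Q (n : nat) : Ob := bip (Q n) (shift_obj P n).

Definition cone_d P Q (d : forall n, Hom (P n.+1) (P n)) (e : forall n, Hom (Q n.+1) (Q n))
    (s : forall n, Hom (P n) (Q n)) (n : nat) : Hom (cone_obj P Q n.+1) (cone_obj P Q n) :=
  bip_i1 _ _ \oc e n \oc bip_p1 _ _ + bip_i1 _ _ \oc s n \oc bip_p2 (Q n.+1) (P n)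
  + bip_i2 _ _ \oc shift_d (fun n => - d n) n \oc bip_p2 (Q n.+1) (P n).

Definition cone X Y (s t : forall n, Hom (obj X n) (obj Y n)) : BinComplex :=
  BinC (cone_d (dtop X) (dtop Y) s) (cone_d (dbot X) (dbot Y) t).

(* The cone of a chain isomorphism is split exact: in degree [n + 1] it is
   [Q_(n+1) (+) P_n], and [(e_n, s_n)] maps it onto [Q_n] with kernel [Q_(n+1)]. *)
Lemma acyclic_cone_d P Q (d : forall n, Hom (P n.+1) (P n))
    (e : forall n, Hom (Q n.+1) (Q n)) (s : forall n, Hom (P n) (Q n)) :
  chain_iso d e s -> is_complex e -> acyclic (cone_d d e s).
Proof.
case=> s_iso s_chain e_complex.
have [s' [s's ss']] : exists s' : forall n, Hom (Q n) (P n),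
    (forall n, s' n \oc s n = idm (P n)) /\ (forall n, s n \oc s' n = idm (Q n)).
  exists (fun n => proj1_sig (constructive_indefinite_description _ (s_iso n))).
  by split=> n; case: (proj2_sig (constructive_indefinite_description _ (s_iso n))).
have ss'K n (W : Ob) (h : Hom W (Q n)) : s n \oc (s' n \oc h) = h.
  by rewrite comp_assoc ss' comp_id_l.
have s'sK n (W : Ob) (h : Hom W (P n)) : s' n \oc (s n \oc h) = h.
  by rewrite comp_assoc s's comp_id_l.
pose phi n : Hom (Q n) (shift_obj P n) := if n is n'.+1 then s' n' \oc e n' else 0.
pose E n : Hom (cone_obj P Q n.+1) (Q n) := e n \oc bip_p1 _ _ + s n \oc bip_p2 (Q n.+1) (P n).
pose M n : Hom (Q n) (cone_obj P Q n) := bip_i1 _ _ - bip_i2 _ _ \oc phi n.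
exists Q, E, M; split.
- move=> n; apply: bip_homR; rewrite /cone_d /M /E; bip_simpl => //.
  case: n => [|n] /=; bip_simpl => //.
  have s_chainK (W : Ob) (h : Hom W (P n.+1)) : e n \oc (s n.+1 \oc h) = s n \oc (d n \oc h).
    by rewrite !comp_assoc s_chain.
  have e_complexK (W : Ob) (h : Hom W (Q n.+2)) : e n \oc (e n.+1 \oc h) = 0.
    by rewrite comp_assoc e_complex comp0l.
  by rewrite s_chainK e_complexK s'sK comp0r oppr0 sub0r.
- move=> n.
  pose psi := bip_i1 _ _ \oc bip_p1 _ _ - bip_i2 _ _ \oc phi n.+1 \oc bip_p1 _ _
              + bip_i2 _ _ \oc bip_p2 (Q n.+1) (P n).
  pose psi' := bip_i1 _ _ \oc bip_p1 _ _ + bip_i2 _ _ \oc phi n.+1 \oc bip_p1 _ _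
               + bip_i2 _ _ \oc bip_p2 (Q n.+1) (P n).
  apply: (conf_iso (a := idm _) (b := psi) (c := s n) _ _ (s_iso n) _ _ (bip_conf12 _ _)).
  + exact: is_iso_id.
  + by exists psi'; split; apply: bip_homR; apply: bip_homL; rewrite /psi /psi'; bip_simpl.
  + by rewrite /M /psi; bip_simpl.
  + apply: bip_homL; rewrite /E /psi /=; bip_simpl => //.
    by rewrite (ss'K n) subrr.
- exists (zero_ob N), (bip_p2 (Q 0) (zero_ob N)); split; first exact: zero_ob0.
  by rewrite /M /=; bip_simpl; exact: bip_conf12.
Qed.

Definition iso_ladder X Y (s t : forall n, Hom (obj X n) (obj Y n)) : Prop :=
  [/\ chain_iso (dtop X) (dtop Y) s, chain_iso (dbot X) (dbot Y) t,
      is_complex (dtop Y) & is_complex (dbot Y)].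

End Cone.
Arguments cone {N} X Y s t.
Arguments iso_ladder {N} X Y s t.

Section Ladder.
Variable N : ExactCat.
Local Notation BinComplex := (BinComplex N).
Implicit Types X Y : BinComplex.

Lemma iso_ladder_unshift X Y s t : iso_ladder X Y s t ->
  iso_ladder (unshift X) (unshift Y) (fun n => s n.+1) (fun n => t n.+1).
Proof.
case=> [[s_iso s_chain] [t_iso t_chain] eY e'Y].
by split; [split | split | |] => n;
  [apply: s_iso | apply: s_chain | apply: t_iso | apply: t_chain | apply: eY | apply: e'Y].
Qed.

Lemma BinAcyc_cone m X Y s t : iso_ladder X Y s t ->
  vanishes_from m (obj X) -> vanishes_from m (obj Y) -> BinAcyc m (cone X Y s t).
Proof.
case=> s_ciso t_ciso eY e'Y X0 Y0; split; try exact: acyclic_cone_d.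
case=> [|n] // lt_mn; apply: bip_zero_obj; first exact: Y0 (ltnW lt_mn).
exact: X0.
Qed.

Lemma short_exact_cone k X Y s t : iso_ladder X Y s t ->
  BinAcyc k X -> BinAcyc k Y -> short_exact k.+1 Y (cone X Y s t) (shift (opp_complex X)).
Proof.
move=> ladder hX hY; have [X0 _ _] := hX; have [Y0 _ _] := hY.
split; [exact: BinAcyc_le hY | exact: BinAcyc_cone ladder X0 Y0 |
        exact/BinAcyc_shift/BinAcyc_opp |].
exists (fun n => bip_i1 (obj Y n) (shift_obj (obj X) n)),
       (fun n => bip_p2 (obj Y n) (shift_obj (obj X) n)).
split=> [n|n|n]; last exact: bip_conf12.
- by rewrite /cone_d; split; bip_simpl.
- by rewrite /cone_d; split; bip_simpl.
Qed.

Lemma short_exact_cone_unshift m X Y s t : iso_ladder X Y s t ->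
  vanishes_from m.+1 (obj X) -> vanishes_from m.+1 (obj Y) ->
  short_exact m.+1 (angle (s 0%N) (t 0%N)) (cone X Y s t)
    (shift (cone (unshift X) (unshift Y) (fun n => s n.+1) (fun n => t n.+1))).
Proof.
move=> ladder X0 Y0; have [[s_iso _] [t_iso _] _ _] := ladder.
split.
- exact: BinAcyc_angle.
- exact: BinAcyc_cone ladder X0 Y0.
- apply/BinAcyc_shift/BinAcyc_cone; first exact: iso_ladder_unshift.
    by move=> n; exact: (X0 n.+1).
  by move=> n; exact: (Y0 n.+1).
pose a n : Hom (angle_obj (obj X 0) (obj Y 0) n) (cone_obj (obj X) (obj Y) n) :=
  match n with
  | 0 => bip_i1 (obj Y 0) (zero_ob N) | 1 => bip_i2 (obj Y 1) (obj X 0) | _.+2 => 0 end.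
pose b n : Hom (cone_obj (obj X) (obj Y) n) (obj (shift (cone (unshift X) (unshift Y)
                  (fun n => s n.+1) (fun n => t n.+1))) n) :=
  match n with
  | 0 => 0 | 1 => bip_i1 (obj Y 1) (zero_ob N) \oc bip_p1 (obj Y 1) (obj X 0)
  | _.+2 => idm _ end.
exists a, b; split.
- by case=> [|[|n]]; rewrite /= /cone_d; split; bip_simpl.
- case=> [|[|n]]; rewrite /= /cone_d; split; bip_simpl => //;
    by apply: zero_obj_homR; exact: zero_ob0.
- case=> [|[|n]] /=.
  + rewrite (zero_obj_homR 0 (bip_p2 (obj Y 0) (zero_ob N)) zero_ob0).
    exact: bip_conf12.
  + apply: (conf_iso (a := idm _) (b := idm _) (c := bip_i1 (obj Y 1) (zero_ob N))
      _ _ _ _ _ (bip_conf21 _ _)); rewrite ?comp_id_l ?comp_id_r //; try exact: is_iso_id.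
    exists (bip_p1 _ _); split; first exact: bip_p1i1.
    rewrite -bip_idE (zero_obj_homR (bip_p2 _ _) 0 zero_ob0).
    by rewrite comp0r addr0.
  + apply: conf_zero_iso (is_iso_id _); exact: zero_ob0.
Qed.

End Ladder.

Section AdditiveInvariants.
Variable N : ExactCat.
Local Notation BinComplex := (BinComplex N).
Implicit Types (X Y Z : BinComplex) (A : zmodType).

Lemma K1_additiveD k A (f : BinComplex -> A) X Y Z :
  K1_additive k f -> short_exact k X Y Z -> f Y = f X + f Z.
Proof. by move=> [fD _] [hX hY hZ [a [b [ha hb conf_ab]]]]; apply: fD conf_ab. Qed.

Lemma K1_additive_le k K A (f : BinComplex -> A) :
  (k <= K)%N -> K1_additive K f -> K1_additive k f.
Proof.
move=> kK [fD f0]; split=> [X Y Z a b hX hY hZ|X hX].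
  by apply: fD; apply: BinAcyc_le kK _.
by apply: f0; apply: BinAcyc_le kK _.
Qed.

Lemma K1_additive_comp_shift K A (f : BinComplex -> A) :
  K1_additive K.+1 f -> K1_additive K (f \o shift).
Proof.
move=> hf; split=> [X Y Z a b hX hY hZ ha hb conf_ab|X hX dX] /=.
  apply: K1_additiveD hf _; apply: short_exact_shift.
  by split=> //; exists a, b.
by apply: (proj2 hf); [apply: BinAcyc_shift | apply: diagonal_shift].
Qed.

(* Degreewise [(-1)^n] is an isomorphism from [X] onto [opp_complex X]. *)
Lemma K1_additive_opp k A (f : BinComplex -> A) X :
  K1_additive k f -> BinAcyc k X -> f (opp_complex X) = f X.
Proof.
move=> hf hX.
pose sign n : Hom (obj X n) (obj X n) := if odd n then - idm _ else idm _.
have sign_iso n : is_iso (sign n).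
  by rewrite /sign; case: (odd n); [apply/is_isoN/is_iso_id | apply: is_iso_id].
have zero_acyc : BinAcyc k (zero_complex N).
  by apply: BinAcyc_zero_obj => n; exact: zero_ob0.
have ses : short_exact k X (opp_complex X) (zero_complex N).
  split => //; first exact: BinAcyc_opp.
  exists sign, (fun n => 0); split=> n.
  - rewrite /sign /=; case: (odd n); split;
      by rewrite ?compNl ?compNr ?comp_id_l ?comp_id_r ?opprK.
  - by split; rewrite !comp0l.
  - by apply: conf_iso_zero (sign_iso n) _; exact: zero_ob0.
by rewrite (K1_additiveD hf ses) (proj2 hf _ zero_acyc) ?addr0.
Qed.

Lemma K1_additive_cone m K A (f : BinComplex -> A) X Y s t :
  K1_additive K f -> (m <= K)%N -> iso_ladder X Y s t ->
  vanishes_from m (obj X) -> vanishes_from m (obj Y) ->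
  f (cone X Y s t) = \sum_(i < m) f (iter i shift (angle (s i) (t i))).
Proof.
elim: m K f X Y s t => [|m IH] K f X Y s t hf le_mK ladder X0 Y0.
  rewrite big_ord0; apply: (proj2 (K1_additive_le le_mK hf)).
    exact: BinAcyc_cone ladder X0 Y0.
  apply: diagonal_zero_obj => n; apply: bip_zero_obj; first exact: Y0.
  by case: n => [|n]; [exact: zero_ob0 | exact: X0].
case: K le_mK hf => [|K] le_mK hf //.
rewrite (K1_additiveD (K1_additive_le le_mK hf) (short_exact_cone_unshift ladder X0 Y0)).
have := IH K (f \o shift) _ _ _ _ (K1_additive_comp_shift hf) le_mK (iso_ladder_unshift ladder)
  (fun n => X0 n.+1) (fun n => Y0 n.+1).
by rewrite /= => ->; rewrite big_ord_recl.
Qed.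

(* Via the ladder of identities, [X >-> cone ->> shift (opp_complex X)] has a
   middle term whose filtration quotients are shifted diagonal complexes. *)
Lemma K1_additive_shift K A (f : BinComplex -> A) X :
  K1_additive K.+1 f -> BinAcyc K X -> f (shift X) = - f X.
Proof.
move=> hf hX; have [X0 Xtop Xbot] := hX.
have ladder : iso_ladder X X (fun n => idm _) (fun n => idm _).
  have id_chain_iso d : chain_iso d d (fun n => idm (obj X n)).
    by split=> n; [exact: is_iso_id | rewrite comp_id_l comp_id_r].
  split; try exact: id_chain_iso.
    exact: acyclic_is_complex Xtop.
  exact: acyclic_is_complex Xbot.
have cone0 : f (cone X X (fun n => idm _) (fun n => idm _)) = 0.
  rewrite (K1_additive_cone hf (leqnn _) ladder X0 X0); apply: big1 => i _.
  have angle_acyc := BinAcyc_angle (leqnn 1) (is_iso_id (obj X i)) (is_iso_id (obj X i)).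
  apply: (proj2 (K1_additive_le _ hf) _ (BinAcyc_iter_shift i angle_acyc)).
  - by rewrite addn1.
  - by apply: diagonal_iter_shift => n.
have opp_shift : f (shift (opp_complex X)) = f (shift X).
  exact: K1_additive_opp (K1_additive_comp_shift hf) hX.
have := K1_additiveD hf (short_exact_cone ladder hX hX).
by rewrite cone0 opp_shift => /esym/eqP; rewrite addrC addr_eq0 => /eqP.
Qed.

Lemma K1_additive_iter_shift K k A (f : BinComplex -> A) X i :
  K1_additive K f -> BinAcyc k X -> (i + k <= K)%N ->
  f (iter i shift X) = f X *~ (-1) ^+ i.
Proof.
move=> hf hX; elim: i => [|i IH] le_ikK /=; first by rewrite expr0 mulr1z.
rewrite (K1_additive_shift (K1_additive_le le_ikK hf) (BinAcyc_iter_shift i hX)).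
by rewrite IH ?exprS ?mulN1r ?mulrNz // ltnW.
Qed.

Lemma K1_additive_ladder k A (f : BinComplex -> A) X Y s t :
  K1_additive k.+1 f -> iso_ladder X Y s t -> BinAcyc k X -> BinAcyc k Y ->
  f Y - f X = \sum_(i < k.+1) f (angle (s i) (t i)) *~ (-1) ^+ i.
Proof.
move=> hf ladder hX hY; have [X0 _ _] := hX; have [Y0 _ _] := hY.
have [[s_iso _] [t_iso _] _ _] := ladder.
rewrite -(K1_additive_opp (K1_additive_le (leqnSn k) hf) hX).
rewrite -(K1_additive_shift hf (BinAcyc_opp hX)).
rewrite -(K1_additiveD hf (short_exact_cone ladder hX hY)).
rewrite (K1_additive_cone hf (leqnn _) ladder X0 Y0); apply: eq_bigr => i _.
apply: K1_additive_iter_shift hf (BinAcyc_angle (leqnn 1) (s_iso i) (t_iso i)) _.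
by rewrite addn1.
Qed.

Lemma K1_additive_L1_additive k A (f : BinComplex -> A) :
  K1_additive k.+1 f -> L1_additive k f.
Proof.
move=> hf; split; first exact: K1_additive_le (leqnSn k) hf.
move=> P d d' e e' s t hX hY s_chain t_chain s_inv t_inv.
have [_ Ytop Ybot] := hY.
apply: K1_additive_ladder hf _ hX hY; split.
- by split=> [n|]; [exists (s n); split; apply: s_inv | exact: s_chain].
- by split=> [n|]; [exists (t n); split; apply: t_inv | exact: t_chain].
- exact: acyclic_is_complex Ytop.
- exact: acyclic_is_complex Ybot.
Qed.

End AdditiveInvariants.

Theorem lemma3p3 (N : ExactCat) (k : nat) (hk : (1 <= k)%N) :
  (* the assignment [X] |-> [X] induces a homomorphism L_1^k -> K_1^(k+1):
     every additive invariant of K_1^(k+1) restricts to one of L_1^k *)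
  (forall (A : zmodType) (f : BinComplex N -> A),
      K1_additive (k.+1) f -> L1_additive k f) /\
  (* i_k : L_1^k -> L_1^(k+1) (same assignment) is well defined, and it is the
     composite L_1^k -> K_1^(k+1) ->> L_1^(k+1) *)
  (forall (A : zmodType) (f : BinComplex N -> A),
      L1_additive (k.+1) f -> K1_additive (k.+1) f /\ L1_additive k f).
Proof.
split=> A f; first exact: K1_additive_L1_additive.
by case=> hf _; split; last exact: K1_additive_L1_additive.
Qed.
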